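(* Let $\mathcal E_\infty(\mathbb N)=\{f\in l^\infty(\mathbb N):\mathrm{AE}(f)=+\infty\}$. Then $\mathcal E_\infty(\mathbb N)$ is dense in $l^\infty(\mathbb N)$ in the norm topology.
   Context: $\mathbb N=\{0,1,2,\ldots\}$ and $l^\infty(\mathbb N)$ is the C*-algebra of bounded complex-valued functions on $\mathbb N$ with the sup norm. Let $\sigma_A:l^\infty(\mathbb N)\to l^\infty(\mathbb N)$ be $(\sigma_Af)(n)=f(n+1)$. An anqie is a unital C*-subalgebra $\mathcal A\subseteq l^\infty(\mathbb N)$ with $\sigma_A(\mathcal A)\subseteq\mathcal A$. For $\mathcal F\subseteq l^\infty(\mathbb N)$, $\mathcal A_{\mathcal F}$ denotes the smallest anqie containing $\mathcal F$. For an anqie $\mathcal A$ with maximal ideal space $X$ (weak* topology), the map $A:X\to X$, $(A\rho)(f)=\rho(\sigma_Af)$, is continuous; the anqie entropy $\mathrm{AE}(\mathcal A)\in[0,\infty]$ is the topological entropy $h(A)$, and $\mathrm{AE}(f)=\mathrm{AE}(\mathcal A_{\{f\}})$. *)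

From Stdlib Require Import Reals List.
Import ListNotations.
Open Scope R_scope.

Record C := mkC { Re : R; Im : R }.
Definition C0 : C := mkC 0 0.
Definition C1 : C := mkC 1 0.
Definition Cadd (z w : C) : C := mkC (Re z + Re w) (Im z + Im w).
Definition Copp (z : C) : C := mkC (- Re z) (- Im z).
Definition Csub (z w : C) : C := Cadd z (Copp w).
Definition Cmul (z w : C) : C :=
  mkC (Re z * Re w - Im z * Im w) (Re z * Im w + Im z * Re w).
Definition Cconj (z : C) : C := mkC (Re z) (- Im z).
Definition Cmod (z : C) : R := sqrt (Re z * Re z + Im z * Im z).

(** Complex sequences on N = {0,1,2,...}; l^infty(N) = bounded ones. *)
Definition seqC := nat -> C.
Definition bounded (f : seqC) : Prop := exists B : R, forall n, Cmod (f n) <= B.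
Definition linf_dist_le (f g : seqC) (e : R) : Prop :=
  forall n, Cmod (Csub (f n) (g n)) <= e.

Definition sadd (f g : seqC) : seqC := fun n => Cadd (f n) (g n).
Definition smul (f g : seqC) : seqC := fun n => Cmul (f n) (g n).
Definition sscale (c : C) (f : seqC) : seqC := fun n => Cmul c (f n).
Definition sconj (f : seqC) : seqC := fun n => Cconj (f n).
Definition sone : seqC := fun _ => C1.
Definition shift (f : seqC) : seqC := fun n => f (S n).

(** An anqie: a unital C*-subalgebra of l^infty(N) (norm-closed, closed under
    the algebra operations and conjugation, containing 1) which is
    invariant under the shift. *)
Definition anqie (B : seqC -> Prop) : Prop :=
  (forall f, B f -> bounded f) /\
  B sone /\
  (forall f g, B f -> B g -> B (sadd f g)) /\
  (forall c f, B f -> B (sscale c f)) /\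
  (forall f g, B f -> B g -> B (smul f g)) /\
  (forall f, B f -> B (sconj f)) /\
  (forall f, bounded f ->
     (forall e, 0 < e -> exists h, B h /\ linf_dist_le f h e) -> B f) /\
  (forall f, B f -> B (shift f)).

Definition gen_anqie (F : seqC -> Prop) (g : seqC) : Prop :=
  forall B, anqie B -> (forall f, F f -> B f) -> B g.

(** Maximal ideal space: characters (nonzero multiplicative linear functionals)
    of A.  Functionals are represented as functions seqC -> C, of which only
    the values on A matter. *)
Definition character (A : seqC -> Prop) (rho : seqC -> C) : Prop :=
  (forall f g, A f -> A g -> rho (sadd f g) = Cadd (rho f) (rho g)) /\
  (forall c f, A f -> rho (sscale c f) = Cmul c (rho f)) /\
  (forall f g, A f -> A g -> rho (smul f g) = Cmul (rho f) (rho g)) /\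
  rho sone = C1.

(** Weak* open subsets of the maximal ideal space X. *)
Definition wopen (A : seqC -> Prop) (O : (seqC -> C) -> Prop) : Prop :=
  forall rho, character A rho -> O rho ->
    exists (gs : list seqC) (eps : R), 0 < eps /\ (forall g, In g gs -> A g) /\
      forall rho', character A rho' ->
        (forall g, In g gs -> Cmod (Csub (rho' g) (rho g)) < eps) -> O rho'.

Definition Amap (rho : seqC -> C) : seqC -> C := fun f => rho (shift f).
Definition Aiter (n : nat) (rho : seqC -> C) : seqC -> C :=
  fun f => rho (Nat.iter n shift f).

Definition fin_open_cover (A : seqC -> Prop) (U : list ((seqC -> C) -> Prop)) : Prop :=
  (forall O, In O U -> wopen A O) /\
  (forall rho, character A rho -> exists O, In O U /\ O rho).

(** Members of the join U v A^{-1}U v ... v A^{-(n-1)}U, indexed by words w of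
    length n over the indices of U: the set of rho with A^i rho in U_{w_i}. *)
Definition join_set (U : list ((seqC -> C) -> Prop)) (n : nat) (w : list nat)
  (rho : seqC -> C) : Prop :=
  forall i, (i < n)%nat -> nth (nth i w 0%nat) U (fun _ => False) (Aiter i rho).

Definition join_covers_with (A : seqC -> Prop) (U : list ((seqC -> C) -> Prop))
  (n k : nat) : Prop :=
  exists ws : list (list nat), length ws = k /\
    (forall w, In w ws -> length w = n /\ forall j, In j w -> (j < length U)%nat) /\
    (forall rho, character A rho -> exists w, In w ws /\ join_set U n w rho).

Definition join_min_card (A : seqC -> Prop) (U : list ((seqC -> C) -> Prop))
  (n k : nat) : Prop :=
  join_covers_with A U n k /\ forall k', join_covers_with A U n k' -> (k <= k')%nat.

Definition cover_entropy (A : seqC -> Prop) (U : list ((seqC -> C) -> Prop)) (h : R) : Prop :=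
  exists c : nat -> nat,
    (forall n, join_min_card A U (S n) (c n)) /\
    Un_cv (fun n => ln (INR (c n)) / INR (S n)) h.

Definition AE_infinite (A : seqC -> Prop) : Prop :=
  forall M : R, exists U, fin_open_cover A U /\
    exists h, cover_entropy A U h /\ M < h.

Definition E_infty (f : seqC) : Prop :=
  bounded f /\ AE_infinite (gen_anqie (fun g => g = f)).

Definition linf_dense (S : seqC -> Prop) : Prop :=
  forall g, bounded g -> forall e, 0 < e -> exists f, S f /\ linf_dist_le f g e.

From Pilot Require Import Defs.
From Stdlib Require Import Reals List Lia Lra FinFun FunctionalExtensionality.
Import ListNotations.

(** Let [g] be bounded by [B0] and put [b = B0 + 1].  Fix a universal sequence
    [univ : nat -> nat] in which every finite word occurs as a block, and pick
    [m] with [2 pi b / m <= e].  Replace the real part of [g n] by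
    [b cos (theta n)], where [theta n] is within [2 pi / m] of [acos (Re g n / b)]
    and [cos (m theta n) = 2 * 2^(-univ n) - 1]; the result [f] is [e]-close
    to [g].  Any anqie containing [f] contains [cos theta] (from [f + conj f]),
    hence [cos (m theta)] (Chebyshev recursion), hence [2^(-univ)], hence, by
    uniform limits of powers, the indicators of all level sets of [univ].
    For every [K] the characters sending the indicator of [{min univ (K-1) = j}]
    to 1 ([j < K]) form an open cover; point evaluations at the occurrences of
    words show that its [n]-fold join needs [K^n] members, so its entropy is
    [ln K].  Letting [K] grow gives [AE(f) = +infinity]. *)

Local Open Scope nat_scope.

Fixpoint words (K n : nat) : list (list nat) :=
  match n with
  | 0 => [[]]
  | S n' => flat_map (fun j => map (cons j) (words K n')) (seq 0 K)
  end.

Definition letters_below (K : nat) (w : list nat) : Prop := forall j, In j w -> j < K.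

Lemma length_words K n : length (words K n) = K ^ n.
Proof.
  induction n as [|n IH]; simpl; [reflexivity|].
  rewrite (flat_map_constant_length (c := K ^ n)), length_seq; [reflexivity|].
  intros; rewrite length_map; exact IH.
Qed.

Lemma In_words K n w : In w (words K n) <-> length w = n /\ letters_below K w.
Proof.
  revert w; induction n as [|n IH]; intros w; simpl.
  - split.
    + intros [<- | []]. split; [reflexivity | intros j []].
    + intros [Hw _]. destruct w; [left; reflexivity | discriminate].
  - rewrite in_flat_map. split.
    + intros [j [Hj Hw]]. apply in_map_iff in Hw as [w' [<- Hw']].
      apply IH in Hw' as [Hlen Hlet]. apply in_seq in Hj.
      split; [simpl; lia|]. intros i [<- | Hi]; [lia | auto].
    + intros [Hlen Hlet]. destruct w as [|a w]; [discriminate|].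
      exists a. split.
      * apply in_seq. specialize (Hlet a (or_introl eq_refl)). lia.
      * apply in_map, IH. split; [simpl in Hlen; lia|]. intros j Hj; apply Hlet; right; exact Hj.
Qed.

Lemma NoDup_words K n : NoDup (words K n).
Proof.
  induction n as [|n IH]; simpl; [repeat constructor; simpl; tauto|].
  induction (seq_NoDup K 0) as [|a l Ha _ IHl]; simpl; [constructor|].
  apply NoDup_app; [| exact IHl |].
  - apply Injective_map_NoDup; [intros u v E; injection E; auto | exact IH].
  - intros w Hw Hw'. apply in_map_iff in Hw as [u [<- _]].
    apply in_flat_map in Hw' as [b [Hb Hw']]. apply in_map_iff in Hw' as [v [E _]].
    injection E as -> _. contradiction.
Qed.

Lemma choose_word (P : nat -> nat -> Prop) K n :
  (forall i, i < n -> exists j, j < K /\ P i j) ->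
  exists w, In w (words K n) /\ forall i, i < n -> P i (nth i w 0).
Proof.
  induction n as [|n IH]; intros Hchoice.
  - exists []. split; [left; reflexivity | intros; lia].
  - destruct IH as [w [Hw HP]]; [intros i Hi; apply Hchoice; lia|].
    apply In_words in Hw as [Hlen Hlet].
    destruct (Hchoice n) as [j [Hj Pj]]; [lia|].
    exists (w ++ [j]). split.
    + apply In_words. rewrite length_app; split; [simpl; lia|].
      intros a Ha. apply in_app_or in Ha as [Ha | [<- | []]]; auto.
    + intros i Hi. destruct (Nat.eq_dec i n) as [-> | Hne].
      * rewrite app_nth2, Hlen, Nat.sub_diag by lia. exact Pj.
      * rewrite app_nth1 by lia. apply HP; lia.
Qed.

(** The universal sequence: the concatenation, for [k = 0, 1, 2, ...], of all
    words of length [k+1] over [{0,..,k}].  Every finite word occurs in it as a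
    block of consecutive values. *)
Definition block (k : nat) : list nat := concat (words (S k) (S k)).
Definition stream_prefix (l : nat) : list nat := flat_map block (seq 0 l).
Definition univ (n : nat) : nat := nth n (stream_prefix (S n)) 0.

Lemma stream_prefix_add a b :
  stream_prefix (a + b) = stream_prefix a ++ flat_map block (seq a b).
Proof. unfold stream_prefix. rewrite seq_app, flat_map_app. reflexivity. Qed.

Lemma length_concat_ge {A} (x : list A) (l : list (list A)) :
  In x l -> length x <= length (concat l).
Proof.
  intros Hx. apply in_split in Hx as [l1 [l2 ->]].
  rewrite concat_app, length_app. simpl. rewrite length_app. lia.
Qed.

(** Each block is nonempty, so the first [l] blocks have at least [l] letters. *)
Lemma stream_prefix_length l : l <= length (stream_prefix l).
Proof.
  induction l as [|l IH]; [simpl; lia|].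
  rewrite <- Nat.add_1_r, stream_prefix_add, length_app. simpl. rewrite app_nil_r.
  enough (1 <= length (block l)) by lia.
  apply Nat.le_trans with (length (repeat 0 (S l))); [rewrite repeat_length; lia|].
  apply length_concat_ge, In_words. rewrite repeat_length. split; [reflexivity|].
  intros j Hj. apply repeat_spec in Hj. lia.
Qed.

Lemma univ_nth l n : n < length (stream_prefix l) -> univ n = nth n (stream_prefix l) 0.
Proof.
  intros Hn. unfold univ. destruct (Nat.le_gt_cases l (S n)) as [Hle | Hgt].
  - replace (S n) with (l + (S n - l)) by lia.
    rewrite stream_prefix_add, app_nth1 by exact Hn. reflexivity.
  - pose proof (stream_prefix_length (S n)).
    replace l with (S n + (l - S n)) by lia.
    rewrite stream_prefix_add, app_nth1 by lia. reflexivity.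
Qed.

Lemma univ_universal w K : letters_below K w ->
  exists m, forall i, i < length w -> univ (m + i) = nth i w 0.
Proof.
  intros Hw. set (l := length w + K).
  set (w' := w ++ repeat 0 (S l - length w)).
  assert (Hw' : In w' (words (S l) (S l))).
  { apply In_words. unfold w'. rewrite length_app, repeat_length. split; [lia|].
    intros j Hj. apply in_app_or in Hj as [Hj | Hj].
    - specialize (Hw j Hj). lia.
    - apply repeat_spec in Hj. lia. }
  apply in_split in Hw' as [u1 [u2 Hsplit]].
  assert (Hpre : stream_prefix (S l) = stream_prefix l ++ concat u1 ++ w' ++ concat u2).
  { rewrite <- Nat.add_1_r, stream_prefix_add. simpl. rewrite app_nil_r.
    unfold block. rewrite Hsplit, concat_app. reflexivity. }
  exists (length (stream_prefix l) + length (concat u1)). intros i Hi.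
  rewrite (univ_nth (S l)).
  - rewrite Hpre, <- Nat.add_assoc, app_nth2_plus, app_nth2_plus.
    unfold w'. rewrite app_nth1, app_nth1; [reflexivity | exact Hi |].
    rewrite length_app. lia.
  - rewrite Hpre, !length_app. unfold w'. rewrite length_app. lia.
Qed.

Local Open Scope R_scope.

Lemma Cmod_real x : Cmod (mkC x 0) = Rabs x.
Proof.
  unfold Cmod; simpl. replace (x * x + 0 * 0) with (Rsqr x) by (unfold Rsqr; ring).
  apply sqrt_Rsqr_abs.
Qed.

Lemma Rabs_Re_le_Cmod z : Rabs (Re z) <= Cmod z.
Proof. unfold Cmod. rewrite <- sqrt_Rsqr_abs. apply sqrt_le_1_alt. unfold Rsqr. nra. Qed.

Lemma Rabs_Im_le_Cmod z : Rabs (Im z) <= Cmod z.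
Proof. unfold Cmod. rewrite <- sqrt_Rsqr_abs. apply sqrt_le_1_alt. unfold Rsqr. nra. Qed.

Lemma Cmod_le_Re_Im z : Cmod z <= Rabs (Re z) + Rabs (Im z).
Proof.
  pose proof (Rabs_pos (Re z)). pose proof (Rabs_pos (Im z)).
  unfold Cmod. rewrite <- (sqrt_Rsqr (Rabs (Re z) + Rabs (Im z))) by lra.
  apply sqrt_le_1_alt. pose proof (Rsqr_abs (Re z)). pose proof (Rsqr_abs (Im z)).
  unfold Rsqr in *. nra.
Qed.

Definition realseq (a : nat -> R) : seqC := fun n => mkC (a n) 0.

Lemma realseq_ext a b : (forall n, a n = b n) -> realseq a = realseq b.
Proof. intros H; apply functional_extensionality; intro n; unfold realseq; rewrite H; reflexivity. Qed.

Lemma sadd_realseq a b : sadd (realseq a) (realseq b) = realseq (fun n => a n + b n).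
Proof. apply functional_extensionality; intro n; unfold sadd, realseq, Cadd; simpl; f_equal; ring. Qed.

Lemma smul_realseq a b : smul (realseq a) (realseq b) = realseq (fun n => a n * b n).
Proof. apply functional_extensionality; intro n; unfold smul, realseq, Cmul; simpl; f_equal; ring. Qed.

Lemma sscale_realseq c a : sscale (mkC c 0) (realseq a) = realseq (fun n => c * a n).
Proof. apply functional_extensionality; intro n; unfold sscale, realseq, Cmul; simpl; f_equal; ring. Qed.

Lemma Csub_real a b : Csub (mkC a 0) (mkC b 0) = mkC (a - b) 0.
Proof. unfold Csub, Cadd, Copp; simpl; f_equal; ring. Qed.

Lemma iter_shift i h : Nat.iter i shift h = fun n => h (i + n)%nat.
Proof.
  apply functional_extensionality; intro n. revert n.
  induction i as [|i IH]; intros n; [reflexivity|].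
  simpl. unfold shift at 1. rewrite IH. f_equal; lia.
Qed.

Section AnqieClosure.
Variable B : seqC -> Prop.
Hypothesis HB : anqie B.

Lemma anqie_one : B sone.
Proof. destruct HB as (_ & H & _); apply H. Qed.
Lemma anqie_add f g : B f -> B g -> B (sadd f g).
Proof. destruct HB as (_ & _ & H & _); apply H. Qed.
Lemma anqie_scale c f : B f -> B (sscale c f).
Proof. destruct HB as (_ & _ & _ & H & _); apply H. Qed.
Lemma anqie_mul f g : B f -> B g -> B (smul f g).
Proof. destruct HB as (_ & _ & _ & _ & H & _); apply H. Qed.
Lemma anqie_conj f : B f -> B (sconj f).
Proof. destruct HB as (_ & _ & _ & _ & _ & H & _); apply H. Qed.
Lemma anqie_closed f : Defs.bounded f ->
  (forall e, 0 < e -> exists h, B h /\ linf_dist_le f h e) -> B f.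
Proof. destruct HB as (_ & _ & _ & _ & _ & _ & H & _); apply H. Qed.
Lemma anqie_shift f : B f -> B (shift f).
Proof. destruct HB as (_ & _ & _ & _ & _ & _ & _ & H); apply H. Qed.

Lemma realseq_const c : B (realseq (fun _ => c)).
Proof.
  replace (realseq (fun _ => c)) with (sscale (mkC c 0) sone) by
    (apply functional_extensionality; intro; unfold sscale, sone, realseq, Cmul, C1; simpl; f_equal; ring).
  apply anqie_scale, anqie_one.
Qed.

Lemma realseq_add a b : B (realseq a) -> B (realseq b) -> B (realseq (fun n => a n + b n)).
Proof. rewrite <- sadd_realseq; apply anqie_add. Qed.

Lemma realseq_mul a b : B (realseq a) -> B (realseq b) -> B (realseq (fun n => a n * b n)).
Proof. rewrite <- smul_realseq; apply anqie_mul. Qed.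

Lemma realseq_scale c a : B (realseq a) -> B (realseq (fun n => c * a n)).
Proof. rewrite <- sscale_realseq; apply anqie_scale. Qed.

Lemma realseq_pow a N : B (realseq a) -> B (realseq (fun n => a n ^ N)).
Proof.
  intros Ha; induction N as [|N IH]; simpl.
  - apply realseq_const.
  - apply realseq_mul; assumption.
Qed.

End AnqieClosure.

Lemma cos_lipschitz a b : Rabs (cos a - cos b) <= Rabs (a - b).
Proof.
  destruct (MVT_abs cos (fun x => - sin x) b a) as [c [Hc _]];
    [intros; apply derivable_pt_lim_cos|].
  rewrite Hc, Rabs_Ropp.
  assert (Rabs (sin c) <= 1) by apply Rabs_le, SIN_bound.
  pose proof (Rabs_pos (a - b)). nra.
Qed.

(** Given [m >= 1] and [x, y] in [[-1,1]], [approx_angle m x y] is an angle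
    [theta] with [m * theta = acos y + 2 pi k], the integer [k] being chosen so
    that [theta] lies within [2 pi / m] of [acos x]. *)
Definition approx_angle (m : nat) (x y : R) : R :=
  (2 * PI * IZR (up (INR m * acos x / (2 * PI)) - 1) + acos y) / INR m.

Lemma approx_angle_winding_nonneg m x : (0 <= up (INR m * acos x / (2 * PI)) - 1)%Z.
Proof.
  pose proof PI_RGT_0.
  assert (Hr : 0 <= INR m * acos x / (2 * PI)).
  { apply Rmult_le_pos; [apply Rmult_le_pos; [apply pos_INR | apply acos_bound] |].
    apply Rlt_le, Rinv_0_lt_compat; lra. }
  destruct (archimed (INR m * acos x / (2 * PI))) as [Hup _].
  assert (Hpos : 0 < IZR (up (INR m * acos x / (2 * PI)))) by lra.
  apply lt_0_IZR in Hpos. lia.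
Qed.

Lemma cos_mult_approx_angle m x y : (1 <= m)%nat -> -1 <= y <= 1 ->
  cos (INR m * approx_angle m x y) = y.
Proof.
  intros Hm Hy. assert (0 < INR m) by (apply lt_0_INR; lia).
  set (k := (up (INR m * acos x / (2 * PI)) - 1)%Z).
  replace (INR m * approx_angle m x y) with (acos y + 2 * INR (Z.to_nat k) * PI).
  - rewrite cos_period. apply cos_acos, Hy.
  - rewrite INR_IZR_INZ, Znat.Z2Nat.id by apply approx_angle_winding_nonneg.
    unfold approx_angle. fold k. field. lra.
Qed.

Lemma approx_angle_close m x y : (1 <= m)%nat -> -1 <= x <= 1 ->
  Rabs (cos (approx_angle m x y) - x) <= 2 * PI / INR m.
Proof.
  intros Hm Hx. assert (0 < INR m) by (apply lt_0_INR; lia). pose proof PI_RGT_0.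
  set (r := INR m * acos x / (2 * PI)).
  destruct (archimed r) as [Hup Hup'].
  assert (Hacos : 0 <= acos y <= PI) by apply acos_bound.
  rewrite <- (cos_acos x Hx) at 2.
  eapply Rle_trans; [apply cos_lipschitz|].
  replace (approx_angle m x y - acos x)
    with ((2 * PI * (IZR (up r) - 1 - r) + acos y) / INR m)
    by (unfold approx_angle, r; rewrite minus_IZR; field; lra).
  unfold Rdiv. rewrite Rabs_mult, Rabs_inv, (Rabs_right (INR m)) by lra.
  apply Rmult_le_compat_r; [apply Rlt_le, Rinv_0_lt_compat; lra|].
  apply Rabs_le. split; nra.
Qed.

Definition half_pow (s : nat -> nat) : seqC := realseq (fun n => (/2) ^ s n).
Definition level_ind (s : nat -> nat) (k n : nat) : R := if (s n =? k)%nat then 1 else 0.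
Definition upper_ind (s : nat -> nat) (k n : nat) : R := if (k <=? s n)%nat then 1 else 0.

Lemma upper_ind_split s k n : upper_ind s k n = level_ind s k n + upper_ind s (S k) n.
Proof.
  unfold upper_ind, level_ind.
  destruct (Nat.leb_spec k (s n)), (Nat.eqb_spec (s n) k), (Nat.leb_spec (S k) (s n));
    try lia; ring.
Qed.

(** On [{s >= k}] the function [2^k 2^(-s)] equals 1 exactly on [{s = k}] and is
    at most [1/2] elsewhere, so its powers converge uniformly to the indicator
    of [{s = k}]. *)
Lemma level_power_approx k t N :
  Rabs ((2 ^ k * (/2) ^ t * (if (k <=? t)%nat then 1 else 0)) ^ S N
        - (if (t =? k)%nat then 1 else 0)) <= (/2) ^ S N.
Proof.
  assert (Hhalf : 0 <= (/2) ^ S N) by (apply pow_le; lra).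
  destruct (Nat.leb_spec k t) as [Hkt | Hkt]; cbv iota.
  - replace t with (k + (t - k))%nat by lia.
    rewrite pow_add, Rmult_1_r, <- Rmult_assoc, <- Rpow_mult_distr.
    replace (2 * / 2) with 1 by field. rewrite pow1, Rmult_1_l.
    destruct (Nat.eqb_spec (k + (t - k)) k) as [Heq | Hne]; cbv iota.
    + replace (t - k)%nat with 0%nat by lia. simpl.
      rewrite pow1, Rmult_1_l, Rminus_diag, Rabs_R0. exact Hhalf.
    + destruct (t - k)%nat as [|d]; [lia|].
      assert (Hd : 0 <= (/2) ^ S d <= /2).
      { assert (0 <= (/2) ^ d <= 1) by (split; [apply pow_le | rewrite <- (pow1 d); apply pow_incr]; lra).
        simpl. nra. }
      assert (0 <= ((/2) ^ S d) ^ S N <= (/2) ^ S N) by (split; [apply pow_le | apply pow_incr]; lra).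
      rewrite Rminus_0_r, Rabs_right; lra.
  - destruct (Nat.eqb_spec t k); [lia|]. cbv iota.
    rewrite Rmult_0_r. simpl. rewrite Rmult_0_l, Rminus_0_r, Rabs_R0. exact Hhalf.
Qed.

Section GeneratedElements.
Variable B : seqC -> Prop.
Hypothesis HB : anqie B.

(** Chebyshev recursion: [cos((j+2) t) = 2 cos t cos((j+1) t) - cos(j t)], so
    [cos theta] generates every [cos(j theta)]. *)
Lemma cos_multiples_in (theta : nat -> R) :
  B (realseq (fun n => cos (theta n))) ->
  forall j, B (realseq (fun n => cos (INR j * theta n))).
Proof.
  intros H1.
  assert (Hpair : forall j, B (realseq (fun n => cos (INR j * theta n)))
                         /\ B (realseq (fun n => cos (INR (S j) * theta n)))).
  { induction j as [|j [Hj HSj]].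
    - split.
      + replace (realseq _) with (realseq (fun _ => 1)) by
          (apply realseq_ext; intros; simpl; rewrite Rmult_0_l, cos_0; reflexivity).
        apply (realseq_const B HB).
      + replace (realseq _) with (realseq (fun n => cos (theta n))) by
          (apply realseq_ext; intros; simpl; rewrite Rmult_1_l; reflexivity).
        exact H1.
    - split; [exact HSj|].
      replace (realseq (fun n => cos (INR (S (S j)) * theta n))) with
        (realseq (fun n => 2 * (cos (theta n) * cos (INR (S j) * theta n))
                           + (-1) * cos (INR j * theta n))).
      + apply (realseq_add B HB); apply (realseq_scale B HB); [apply (realseq_mul B HB) |];
          assumption.
      + apply realseq_ext; intros n. rewrite !S_INR.
        replace ((INR j + 1 + 1) * theta n) with ((INR j + 1) * theta n + theta n) by ring.
        replace (INR j * theta n) with ((INR j + 1) * theta n - theta n) by ring.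
        rewrite cos_plus, cos_minus. ring. }
  intros j; apply Hpair.
Qed.

Lemma level_ind_from_upper s k : B (half_pow s) ->
  B (realseq (upper_ind s k)) -> B (realseq (level_ind s k)).
Proof.
  intros Hh Hup. apply (anqie_closed B HB).
  - exists 1. intros n. unfold realseq, level_ind. rewrite Cmod_real.
    destruct (s n =? k)%nat; rewrite ?Rabs_R1, ?Rabs_R0; lra.
  - intros eps Heps.
    destruct (pow_lt_1_zero (/2)) with eps as [N HN]; [rewrite Rabs_right; lra | exact Heps |].
    set (q := fun n => 2 ^ k * ((/2) ^ s n * upper_ind s k n)).
    exists (realseq (fun n => q n ^ S N)). split.
    + apply (realseq_pow B HB), (realseq_scale B HB), (realseq_mul B HB); assumption.
    + intros n. unfold realseq. rewrite Csub_real, Cmod_real, Rabs_minus_sym.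
      unfold q, upper_ind, level_ind. rewrite <- Rmult_assoc.
      eapply Rle_trans; [apply level_power_approx|].
      specialize (HN (S N) ltac:(lia)). rewrite Rabs_right in HN by (apply Rle_ge, pow_le; lra).
      lra.
Qed.

Lemma level_sets_in s : B (half_pow s) ->
  forall k, B (realseq (upper_ind s k)) /\ B (realseq (level_ind s k)).
Proof.
  intros Hh k. induction k as [|k [Hup Hlev]].
  - assert (Hup0 : B (realseq (upper_ind s 0))).
    { replace (realseq (upper_ind s 0)) with (realseq (fun _ => 1))
        by (apply realseq_ext; reflexivity).
      apply (realseq_const B HB). }
    split; [exact Hup0 | apply level_ind_from_upper; assumption].
  - assert (HupS : B (realseq (upper_ind s (S k)))).
    { replace (realseq (upper_ind s (S k)))
        with (realseq (fun n => upper_ind s k n + (-1) * level_ind s k n))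
        by (apply realseq_ext; intros n; rewrite (upper_ind_split s k n); ring).
      apply (realseq_add B HB); [| apply (realseq_scale B HB)]; assumption. }
    split; [exact HupS | apply level_ind_from_upper; assumption].
Qed.

End GeneratedElements.

(** The perturbation of [g] encoding [s]: the real part of [g n] is replaced by
    [bound * cos (theta n)], with [theta n] an angle whose cosine is close to
    [Re (g n) / bound] and such that [cos (m * theta n) = 2 * 2^(-s n) - 1]. *)
Section Perturbation.
Variable g : seqC.
Variable bound : R.
Variable m : nat.
Variable s : nat -> nat.
Hypothesis Hbound : 0 < bound.
Hypothesis Hm : (1 <= m)%nat.

Definition perturb_angle (n : nat) : R :=
  approx_angle m (Re (g n) / bound) (2 * (/2) ^ s n - 1).

Definition perturb : seqC := fun n => mkC (bound * cos (perturb_angle n)) (Im (g n)).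

Lemma perturb_close n : Rabs (Re (g n)) <= bound ->
  Cmod (Csub (perturb n) (g n)) <= bound * (2 * PI / INR m).
Proof.
  intros Hg. unfold Csub, Cadd, Copp, perturb; simpl.
  replace (Im (g n) + - Im (g n)) with 0 by ring. rewrite Cmod_real.
  replace (bound * cos (perturb_angle n) + - Re (g n))
    with (bound * (cos (perturb_angle n) - Re (g n) / bound)) by (field; lra).
  rewrite Rabs_mult, (Rabs_right bound) by lra.
  apply Rmult_le_compat_l; [lra|]. apply approx_angle_close; [exact Hm|].
  assert (-bound <= Re (g n) <= bound) by (unfold Rabs in Hg; destruct Rcase_abs; lra).
  assert (Re (g n) / bound * bound = Re (g n)) by (field; lra).
  set (x := Re (g n) / bound) in *. nra.
Qed.

Lemma perturb_bounded B0 : (forall n, Cmod (g n) <= B0) -> Defs.bounded perturb.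
Proof.
  intros Hg. exists (bound + B0). intros n.
  eapply Rle_trans; [apply Cmod_le_Re_Im|]. unfold perturb; simpl.
  rewrite Rabs_mult, (Rabs_right bound) by lra.
  assert (Rabs (cos (perturb_angle n)) <= 1) by apply Rabs_le, COS_bound.
  assert (Rabs (Im (g n)) <= B0) by (eapply Rle_trans; [apply Rabs_Im_le_Cmod | apply Hg]).
  nra.
Qed.

(** Every anqie containing the perturbation contains [2^(-s)]: the real part
    gives [cos theta], Chebyshev gives [cos (m theta) = 2 * 2^(-s) - 1]. *)
Lemma perturb_generates (B : seqC -> Prop) : anqie B -> B perturb -> B (half_pow s).
Proof.
  intros HB Hf.
  assert (Hcos : B (realseq (fun n => cos (perturb_angle n)))).
  { replace (realseq _) with (sscale (mkC (/ (2 * bound)) 0) (sadd perturb (sconj perturb))).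
    - apply (anqie_scale B HB), (anqie_add B HB); [exact Hf | apply (anqie_conj B HB), Hf].
    - apply functional_extensionality; intro n.
      unfold realseq, sscale, sadd, sconj, perturb, Cconj, Cadd, Cmul; simpl.
      f_equal; field; lra. }
  pose proof (cos_multiples_in B HB perturb_angle Hcos m) as Hcosm.
  replace (half_pow s) with (realseq (fun n => /2 * (cos (INR m * perturb_angle n) + 1))).
  - apply (realseq_scale B HB), (realseq_add B HB); [exact Hcosm | apply (realseq_const B HB)].
  - apply realseq_ext; intros n. unfold perturb_angle.
    rewrite cos_mult_approx_angle; [field | exact Hm |].
    assert (0 < (/2) ^ s n <= 1)
      by (split; [apply pow_lt | rewrite <- (pow1 (s n)); apply pow_incr]; lra).
    lra.
Qed.

End Perturbation.

Lemma character_idempotent A rho p : character A rho -> A p -> smul p p = p ->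
  rho p = Defs.C0 \/ rho p = Defs.C1.
Proof.
  intros (_ & _ & Hmul & _) Hp Hpp.
  pose proof (Hmul p p Hp Hp) as E. rewrite Hpp in E.
  destruct (rho p) as [a b]. unfold Cmul in E; simpl in E. injection E as E1 E2.
  assert (b = 0) by nra. subst b.
  assert (a * (a - 1) = 0) by nra.
  destruct (Rmult_integral _ _ H) as [Ha | Ha]; [left | right]; unfold Defs.C0, Defs.C1; f_equal; lra.
Qed.

Lemma character_split A rho p q : character A rho -> A p -> A q -> smul p p = p ->
  rho (sadd p q) = Defs.C1 -> rho p = Defs.C1 \/ rho q = Defs.C1.
Proof.
  intros Hrho Hp Hq Hpp Hsum.
  destruct (character_idempotent A rho p Hrho Hp Hpp) as [H0 | H1]; [right | left; exact H1].
  destruct Hrho as (Hadd & _). rewrite Hadd, H0 in Hsum by assumption.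
  destruct (rho q) as [a b]. unfold Cadd, Defs.C0, Defs.C1 in *; simpl in Hsum.
  injection Hsum as Ea Eb. f_equal; lra.
Qed.

Lemma eval_character A m : character A (fun h => h m).
Proof. repeat split. Qed.

Lemma Aiter_character A rho i : (forall h, A h -> A (shift h)) ->
  character A rho -> character A (Aiter i rho).
Proof.
  intros Hshift (Hadd & Hscale & Hmul & Hone).
  assert (Hiter : forall h, A h -> A (Nat.iter i shift h))
    by (intros h Hh; induction i; simpl; auto).
  unfold Aiter. repeat split.
  - intros f g Hf Hg. rewrite <- Hadd by auto. f_equal. rewrite !iter_shift. reflexivity.
  - intros c f Hf. rewrite <- Hscale by auto. f_equal. rewrite !iter_shift. reflexivity.
  - intros f g Hf Hg. rewrite <- Hmul by auto. f_equal. rewrite !iter_shift. reflexivity.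
  - rewrite iter_shift. exact Hone.
Qed.

Lemma Aiter_eval i m : Aiter i (fun h => h m) = fun h => h (i + m)%nat.
Proof. unfold Aiter. apply functional_extensionality; intro h. rewrite iter_shift. reflexivity. Qed.

(** The [K] clopen sets [{rho | rho (cell j) = 1}],
    where [cell j] indicates [{min s (K-1) = j}], form a cover whose [n]-fold
    join needs exactly [K^n] members: every word of length [n] occurs in [s],
    so the evaluation at its position lies in only one member of the join. *)
Section CoverEntropy.
Variable A : seqC -> Prop.
Variable s : nat -> nat.
Hypothesis Hshift : forall h, A h -> A (shift h).
Hypothesis Hlevel : forall k, A (realseq (upper_ind s k)) /\ A (realseq (level_ind s k)).
Hypothesis Huniv : forall w K, letters_below K w ->
  exists m, forall i, (i < length w)%nat -> s (m + i)%nat = nth i w 0%nat.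

Definition cell (K j : nat) : seqC :=
  realseq (fun n => if (Nat.min (s n) (K - 1) =? j)%nat then 1 else 0).
Definition cell_open (K j : nat) (rho : seqC -> Defs.C) : Prop := rho (cell K j) = Defs.C1.
Definition cell_cover (K : nat) : list ((seqC -> Defs.C) -> Prop) := map (cell_open K) (seq 0 K).

Lemma cell_level K j : (j < K - 1)%nat -> cell K j = realseq (level_ind s j).
Proof.
  intros Hj. apply realseq_ext; intros n. unfold level_ind.
  destruct (Nat.eqb_spec (Nat.min (s n) (K - 1)) j), (Nat.eqb_spec (s n) j); lia || reflexivity.
Qed.

Lemma cell_last K : cell K (K - 1) = realseq (upper_ind s (K - 1)).
Proof.
  apply realseq_ext; intros n. unfold upper_ind.
  destruct (Nat.eqb_spec (Nat.min (s n) (K - 1)) (K - 1)), (Nat.leb_spec (K - 1) (s n));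
    lia || reflexivity.
Qed.

Lemma cell_in K j : (j < K)%nat -> A (cell K j).
Proof.
  intros Hj. destruct (Nat.eq_dec j (K - 1)) as [-> | Hne].
  - rewrite cell_last. apply Hlevel.
  - rewrite cell_level by lia. apply Hlevel.
Qed.

Lemma cell_idempotent K j : smul (cell K j) (cell K j) = cell K j.
Proof.
  unfold cell. rewrite smul_realseq. apply realseq_ext; intros n. destruct (_ =? _)%nat; ring.
Qed.

Lemma nth_cell_cover K j : (j < K)%nat -> nth j (cell_cover K) (fun _ => False) = cell_open K j.
Proof.
  intros Hj. unfold cell_cover.
  rewrite nth_indep with (d' := cell_open K 0) by (rewrite length_map, length_seq; exact Hj).
  rewrite map_nth, seq_nth by exact Hj. reflexivity.
Qed.

(** Every character lies in some cell: split [1 = upper_0] successively into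
    [level_j + upper_(j+1)] until a summand takes the value 1. *)
Lemma character_in_cell K rho : (1 <= K)%nat -> character A rho ->
  exists j, (j < K)%nat /\ cell_open K j rho.
Proof.
  intros HK Hrho.
  assert (Hdesc : forall d j, (j + d = K - 1)%nat -> rho (realseq (upper_ind s j)) = Defs.C1 ->
            exists i, (i < K)%nat /\ cell_open K i rho).
  { induction d as [|d IH]; intros j Hjd Hup.
    - exists j. split; [lia|]. unfold cell_open.
      assert (Ej : j = (K - 1)%nat) by lia. rewrite Ej in Hup |- *.
      rewrite cell_last. exact Hup.
    - replace (realseq (upper_ind s j))
        with (sadd (realseq (level_ind s j)) (realseq (upper_ind s (S j)))) in Hup
        by (rewrite sadd_realseq; apply realseq_ext; intros; symmetry; apply upper_ind_split).
      destruct (character_split A rho _ _ Hrho (proj2 (Hlevel j)) (proj1 (Hlevel (S j)))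
                  ltac:(rewrite <- (cell_level K j) by lia; apply cell_idempotent) Hup)
        as [Hj | HSj].
      + exists j. split; [lia|]. unfold cell_open. rewrite cell_level by lia. exact Hj.
      + apply (IH (S j)); [lia | exact HSj]. }
  apply (Hdesc (K - 1)%nat 0%nat); [lia|].
  replace (realseq (upper_ind s 0)) with sone by (apply realseq_ext; reflexivity).
  apply Hrho.
Qed.

Lemma cell_cover_open K : (1 <= K)%nat -> fin_open_cover A (cell_cover K).
Proof.
  intros HK. split.
  - intros O HO. unfold cell_cover in HO. apply in_map_iff in HO as [j [<- Hj]].
    apply in_seq in Hj.
    intros rho Hrho Hcell. exists [cell K j], (/2). split; [lra|]. split.
    + intros h [<- | []]. apply cell_in; lia.
    + intros rho' Hrho' Hnear. specialize (Hnear (cell K j) (or_introl eq_refl)).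
      destruct (character_idempotent A rho' (cell K j) Hrho') as [H0 | H1];
        [apply cell_in; lia | apply cell_idempotent | | exact H1].
      unfold cell_open in Hcell. rewrite H0, Hcell in Hnear. unfold Defs.C0, Defs.C1 in Hnear.
      rewrite Csub_real, Cmod_real, Rabs_left in Hnear; lra.
  - intros rho Hrho. destruct (character_in_cell K rho HK Hrho) as [j [Hj Hcell]].
    exists (cell_open K j). split; [apply in_map, in_seq; lia | exact Hcell].
Qed.

Lemma cell_join_min_card K n : (1 <= K)%nat -> join_min_card A (cell_cover K) n (K ^ n).
Proof.
  intros HK.
  assert (Hlen : length (cell_cover K) = K) by (unfold cell_cover; rewrite length_map, length_seq; reflexivity).
  split.
  - exists (words K n). split; [apply length_words|]. split.
    + intros w Hw. apply In_words in Hw as [Hwn Hw]. rewrite Hlen. split; assumption.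
    + intros rho Hrho.
      destruct (choose_word (fun i j => cell_open K j (Aiter i rho)) K n) as [w [Hw Hcells]].
      { intros i Hi. apply character_in_cell; [exact HK | apply Aiter_character; assumption]. }
      exists w. split; [exact Hw|].
      apply In_words in Hw as [Hwn Hw].
      intros i Hi. rewrite nth_cell_cover by (apply Hw, nth_In; lia). apply Hcells, Hi.
  - intros k' (ws & Hk' & Hws & Hcov). rewrite <- Hk', <- length_words.
    apply NoDup_incl_length; [apply NoDup_words|].
    intros w Hw. apply In_words in Hw as [Hwn Hw].
    destruct (Huniv w K Hw) as [m Hm].
    destruct (Hcov (fun h => h m) (eval_character A m)) as [w' [Hw' Hjoin]].
    destruct (Hws w' Hw') as [Hw'n Hw'K]. rewrite Hlen in Hw'K.
    replace w with w'; [exact Hw'|].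
    apply nth_ext with 0%nat 0%nat; [lia|]. intros i Hi.
    specialize (Hjoin i ltac:(lia)).
    assert (Hlt : (nth i w' 0 < K)%nat) by (apply Hw'K, nth_In; exact Hi).
    rewrite nth_cell_cover, Aiter_eval in Hjoin by exact Hlt.
    unfold cell_open, cell, realseq, Defs.C1 in Hjoin.
    destruct (Nat.eqb_spec (Nat.min (s (i + m)) (K - 1)) (nth i w' 0%nat)) as [E | _].
    + rewrite Nat.add_comm, Hm in E by lia.
      assert (nth i w 0%nat < K)%nat by (apply Hw, nth_In; lia). lia.
    + injection Hjoin as E. lra.
Qed.

Lemma cell_cover_entropy K : (1 <= K)%nat -> cover_entropy A (cell_cover K) (ln (INR K)).
Proof.
  intros HK. exists (fun n => K ^ S n)%nat. split; [intros n; apply cell_join_min_card, HK|].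
  intros eps Heps. exists 0%nat. intros n _. unfold R_dist.
  rewrite pow_INR, ln_pow by (apply lt_0_INR; lia).
  replace (INR (S n) * ln (INR K) / INR (S n) - ln (INR K)) with 0
    by (field; apply not_0_INR; lia).
  rewrite Rabs_R0. exact Heps.
Qed.

Lemma AE_infinite_universal : AE_infinite A.
Proof.
  intros M. destruct (INR_archimed 1 (exp M)) as [K HK]; [lra|]. rewrite Rmult_1_r in HK.
  assert (HK1 : (1 <= K)%nat) by (destruct K; [simpl in HK; pose proof (exp_pos M); lra | lia]).
  exists (cell_cover K). split; [apply cell_cover_open, HK1|].
  exists (ln (INR K)). split; [apply cell_cover_entropy, HK1|].
  rewrite <- (ln_exp M). apply ln_increasing; [apply exp_pos | lra].
Qed.

End CoverEntropy.

(** The anqie generated by a perturbation encoding the universal sequence has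
    infinite entropy: it is shift-invariant and contains all level sets of
    [univ]. *)
Lemma perturb_univ_AE_infinite g bound m : 0 < bound -> (1 <= m)%nat ->
  AE_infinite (gen_anqie (fun h => h = perturb g bound m univ)).
Proof.
  intros Hbound Hm. apply AE_infinite_universal with (s := univ).
  - intros h Hh B HB HF. apply (anqie_shift B HB), Hh; assumption.
  - intros k. split; intros B HB HF;
      pose proof (perturb_generates g bound m univ Hbound Hm B HB (HF _ eq_refl)) as Hhalf;
      apply (level_sets_in B HB univ Hhalf k).
  - intros w K Hw. apply univ_universal with K, Hw.
Qed.

Lemma fine_mesh c e : 0 < e -> exists m, (1 <= m)%nat /\ c * (2 * PI / INR m) <= e.
Proof.
  intros He. pose proof PI_RGT_0.
  destruct (INR_archimed e (Rabs c * (2 * PI))) as [m Hmc]; [lra|].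
  assert (Hm : (1 <= m)%nat)
    by (destruct m; [simpl in Hmc; pose proof (Rabs_pos c); nra | lia]).
  assert (0 < INR m) by (apply lt_0_INR; lia).
  exists m. split; [exact Hm|].
  apply Rle_trans with (Rabs c * (2 * PI / INR m)).
  - apply Rmult_le_compat_r; [apply Rlt_le, Rdiv_lt_0_compat; lra | apply Rle_abs].
  - unfold Rdiv. rewrite <- Rmult_assoc. apply (Rmult_le_reg_r (INR m)); [lra|].
    rewrite Rmult_assoc, Rinv_l by lra. lra.
Qed.

Theorem theorem1p3 : linf_dense E_infty.
Proof.
  intros g [B0 Hg] e He.
  assert (HB0 : 0 <= B0) by (eapply Rle_trans; [apply sqrt_pos | apply (Hg 0%nat)]).
  set (bound := B0 + 1).
  assert (Hbound : 0 < bound) by (unfold bound; lra).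
  destruct (fine_mesh bound e He) as [m [Hm Hmesh]].
  exists (perturb g bound m univ). split; [split|].
  - apply perturb_bounded with B0; assumption.
  - apply perturb_univ_AE_infinite; assumption.
  - intros n. eapply Rle_trans; [apply perturb_close; [exact Hbound | exact Hm |] | exact Hmesh].
    eapply Rle_trans; [apply Rabs_Re_le_Cmod | specialize (Hg n); unfold bound; lra].
Qed.
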